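(* Let $r\ge1$ and let $\tau,\tau'$ be permutations of $F^r$ fixing $\mathbf 0$. (i) If $SQS_\tau$ and $SQS_{\tau'}$ are both affine, they are isomorphic. (ii) If at least one of $SQS_\tau$, $SQS_{\tau'}$ is not affine, then for a permutation $\pi$ of the point set we have $SQS_\tau\sim_\pi SQS_{\tau'}$ if and only if one of the following holds: (a) $\pi=(\sigma_{a,A}|\sigma_{b,B})$ for some $(a,A),(b,B)\in\mathrm{GA}(r,2)$ with $\tau'=B\tau A^{-1}$; (b) $\pi=(\sigma_{a,A}|\sigma_{b,B})\,\xi$ for some $(a,A),(b,B)\in\mathrm{GA}(r,2)$ with $\tau'=B\tau^{-1}A^{-1}$. Moreover, for any $(a,A),(b,B)\in\mathrm{GA}(r,2)$ and any $\tau$, the permutation in (a) (resp. (b)) maps $SQS_\tau$ onto $SQS_{B\tau A^{-1}}$ (resp. $SQS_{B\tau^{-1}A^{-1}}$).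
   Context: $F=\mathrm{GF}(2)$, $\mathbf 0$ is the all-zero vector. The point set consists of the $2^{r+1}$ symbols $(\{a\},\emptyset)$ and $(\emptyset,\{a\})$, $a\in F^r$; a pair $(X,Y)$ with $X,Y\subseteq F^r$ denotes the set of points $\{(\{x\},\emptyset):x\in X\}\cup\{(\emptyset,\{y\}):y\in Y\}$. $SQS_\tau=Q_0\cup Q_1\cup Q_\tau$ where $Q_0=\{(\{a,b,c,d\},\emptyset): a,b,c,d\in F^r \text{ pairwise distinct}, a+b+c+d=\mathbf 0\}$, $Q_1=\{(\emptyset,\{a,b,c,d\}): a,b,c,d\in F^r \text{ pairwise distinct}, a+b+c+d=\mathbf 0\}$, $Q_\tau=\{(\{a,c\},\{b,d\}): a,b,c,d\in F^r, \tau(a+c)=b+d\neq\mathbf 0\}$. $SQS_\tau\sim_\pi SQS_{\tau'}$ means that $\pi$ maps the set of quadruples of $SQS_\tau$ onto that of $SQS_{\tau'}$. A Steiner quadruple system is affine if it is (isomorphic to) the system of supports of the weight-4 codewords of an extended Hamming code of the same length. $\mathrm{GA}(r,2)$ is the group of affine maps $(a,M):b\mapsto a+Mb$ of $F^r$, $a\in F^r$, $M\in\mathrm{GL}(r,2)$. For $(a,A),(b,B)\in\mathrm{GA}(r,2)$, $(\sigma_{a,A}|\sigma_{b,B})$ is the permutation of points $(\{c\},\emptyset)\mapsto(\{a+Ac\},\emptyset)$, $(\emptyset,\{c\})\mapsto(\emptyset,\{b+Bc\})$. $\xi$ is the permutation swapping $(\{c\},\emptyset)$ and $(\emptyset,\{c\})$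 for every $c\in F^r$. For a permutation $\rho$ of $F^r$ and $A,B\in\mathrm{GL}(r,2)$, $B\rho A^{-1}$ denotes the permutation $x\mapsto B\rho(A^{-1}x)$ of $F^r$. *)

From HB Require Import structures.
From mathcomp Require Import all_boot all_order all_algebra all_fingroup.
Set Implicit Arguments. Unset Strict Implicit. Unset Printing Implicit Defensive.
Import GRing.Theory.
Local Open Scope ring_scope.

Notation vec r := 'cV['F_2]_r.

(* Points: inl c = ({c},emptyset), inr c = (emptyset,{c}) *)
Definition pt (r : nat) : finType := (vec r + vec r)%type.
Definition L {r : nat} (x : vec r) : pt r := inl x.
Definition R {r : nat} (x : vec r) : pt r := inr x.

Definition Q0 (r : nat) : {set {set pt r}} :=
  [set q : {set pt r} | [exists a : vec r, exists b : vec r, exists c : vec r, exists d : vec r,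
     [&& [&& a != b, a != c, a != d, b != c, b != d & c != d],
         a + b + c + d == 0 &
         q == [set L a; L b; L c; L d]]]].

Definition Q1 (r : nat) : {set {set pt r}} :=
  [set q : {set pt r} | [exists a : vec r, exists b : vec r, exists c : vec r, exists d : vec r,
     [&& [&& a != b, a != c, a != d, b != c, b != d & c != d],
         a + b + c + d == 0 &
         q == [set R a; R b; R c; R d]]]].

Definition Qtau (r : nat) (tau : vec r -> vec r) : {set {set pt r}} :=
  [set q : {set pt r} | [exists a : vec r, exists b : vec r, exists c : vec r, exists d : vec r,
     [&& tau (a + c) == b + d, b + d != 0 &
         q == [set L a; L c; R b; R d]]]].

Definition SQS (r : nat) (tau : vec r -> vec r) : {set {set pt r}} :=
  Q0 r :|: Q1 r :|: Qtau tau.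

Definition maps_onto (T : finType) (pi : T -> T) (S S' : {set {set T}}) : Prop :=
  [set pi @: q | q : {set T} in S] = S'.

(* Extended binary Hamming code of length 2^m: parity-check matrix whose
   columns are the vectors (1; x), x in F^m; coordinates indexed by F^m. *)
Definition ext_hamming (m : nat) : {set {ffun vec m -> 'F_2}} :=
  [set c : {ffun vec m -> 'F_2} |
     (\sum_(x : vec m) c x == 0) && (\sum_(x : vec m) c x *: x == 0)].

Definition supp (m : nat) (c : {ffun vec m -> 'F_2}) : {set vec m} :=
  [set x | c x != 0].

Definition hamming_weight4_supports (m : nat) : {set {set vec m}} :=
  [set supp c | c : {ffun vec m -> 'F_2} in [set c in ext_hamming m | #|supp c| == 4%N]].

Definition affine_SQS (T : finType) (S : {set {set T}}) : Prop :=
  exists (m : nat) (f : T -> vec m),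
    bijective f /\ [set f @: q | q : {set T} in S] = hamming_weight4_supports m.

Definition isomorphic_SQS (T : finType) (S S' : {set {set T}}) : Prop :=
  exists pi : {perm T}, maps_onto pi S S'.

Definition sigma2 (r : nat) (a : vec r) (A : 'M['F_2]_r) (b : vec r) (B : 'M['F_2]_r)
  (p : pt r) : pt r :=
  match p with
  | inl c => L (a + A *m c)
  | inr c => R (b + B *m c)
  end.

Definition xi (r : nat) (p : pt r) : pt r :=
  match p with inl c => R c | inr c => L c end.

Definition conjmap (r : nat) (B : 'M['F_2]_r) (rho : vec r -> vec r) (A : 'M['F_2]_r)
  : vec r -> vec r := fun x => B *m rho (invmx A *m x).

From HB Require Import structures.
From mathcomp Require Import all_boot all_order all_algebra all_fingroup.
Import GRing.Theory.
Local Open Scope ring_scope.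
Set Implicit Arguments. Unset Strict Implicit. Unset Printing Implicit Defensive.

(* A 4-set of points lies in SQS_tau iff it has an even number of points on each side
   and tau maps the sum of its left points to the sum of its right points.  This
   description is preserved by (sigma_{a,A} | sigma_{b,B}) when tau' A = B tau, and by
   xi when tau is replaced by tau^-1.
   If tau is additive, L x |-> (0, x), R y |-> (1, tau^-1 y) maps SQS_tau onto the
   zero-sum 4-subsets of F^(r+1), i.e. onto the extended Hamming system; this gives (i),
   and in (ii) it shows that neither tau nor tau' is additive.
   Call a pair {x, y} closed if for any two quadruples {x, y, z, w} and {x, y, z', w'}
   the set {z, w, z', w'} is again a quadruple.  Pairs on one side are closed, while a
   closed mixed pair forces tau to be additive.  Isomorphisms preserve closed pairs, so
   between two non-additive systems they preserve or swap the sides.  A side-preserving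
   isomorphism maps zero-sum 4-sets of F^r to zero-sum 4-sets on each side, hence is
   affine on each side, and the mixed quadruples {L 0, L u, R 0, R (tau u)} then give
   tau' A = B tau. *)

Lemma F2P (x : 'F_2) : x = 0 \/ x = 1.
Proof. by case: x => [[|[|//]] lt_x2]; [left | right]; apply: val_inj. Qed.

Lemma pchar_F2 : 2%N \in [pchar 'F_2].
Proof. exact: pchar_Fp. Qed.

Lemma addrr_F2 (x : 'F_2) : x + x = 0.
Proof. exact: (addrr_pchar2 pchar_F2). Qed.

Lemma natr_F2_eq0 (n : nat) : (n%:R == 0 :> 'F_2) = ~~ odd n.
Proof. by rewrite -(dvdn_pcharf pchar_F2) dvdn2. Qed.

Lemma inj_eq0 (U V : nmodType) (t : U -> V) x : injective t -> t 0 = 0 -> (t x == 0) = (x == 0).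
Proof. by move=> t_inj t0; rewrite -{1}t0 (inj_eq t_inj). Qed.

Section F2Matrices.
Variables m n : nat.
Implicit Types x y : 'M['F_2]_(m, n).

Lemma addmx_F2 x : x + x = 0.
Proof. by apply/matrixP => i j; rewrite !mxE addrr_F2. Qed.

Lemma oppmx_F2 x : - x = x.
Proof. exact/addr0_eq/addmx_F2. Qed.

Lemma addmx_eq0_F2 x y : (x + y == 0) = (x == y).
Proof. by rewrite addr_eq0 oppmx_F2. Qed.

Lemma addKmx_F2 x y : x + (x + y) = y.
Proof. by rewrite addrA addmx_F2 add0r. Qed.

Lemma eq_addmx_F2 x y : (x == x + y) = (y == 0).
Proof. by rewrite -addmx_eq0_F2 addKmx_F2. Qed.

End F2Matrices.

Lemma sum_col_mx (V : nmodType) (I : finType) (P : pred I) m1 m2 n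
    (U : I -> 'M[V]_(m1, n)) (D : I -> 'M[V]_(m2, n)) :
  \sum_(i | P i) col_mx (U i) (D i) = col_mx (\sum_(i | P i) U i) (\sum_(i | P i) D i).
Proof.
apply: (big_rec3 (fun s u d => s = col_mx u d)) => [|i s u d _ ->].
  by rewrite col_mx0.
by rewrite add_col_mx.
Qed.

Lemma mx11_eq0 (V : nmodType) (U : 'M[V]_1) : (U == 0) = (U 0 0 == 0).
Proof.
apply/eqP/eqP => [-> | U0]; first by rewrite mxE.
by apply/matrixP => i j; rewrite !ord1 U0 mxE.
Qed.

Lemma card_vec (m : nat) : #|{: vec m}| = (2 ^ m)%N.
Proof. by rewrite card_mx card_Fp // muln1. Qed.

Section FourSets.
Variable T : finType.
Implicit Types a b c d : T.

Lemma uniq4E a b c d :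
  uniq [:: a; b; c; d] = [&& a != b, a != c, a != d, b != c, b != d & c != d].
Proof. by rewrite /= !inE !negb_or !andbT -!andbA. Qed.

Lemma card_set4 a b c d : uniq [:: a; b; c; d] -> #|[set a; b; c; d]| = 4%N.
Proof. by move/card_uniqP => /= <-; apply: eq_card => x; rewrite !inE !orbA. Qed.

Lemma set4P (A : {set T}) :
  reflect (exists a b c d, uniq [:: a; b; c; d] /\ A = [set a; b; c; d]) (#|A| == 4%N).
Proof.
apply: (iffP eqP) => [|[a [b [c [d [U ->]]]]]]; last exact: card_set4.
rewrite cardE; case E: (enum A) => [|a [|b [|c [|d [|]]]]] // _.
exists a, b, c, d; split; first by rewrite -E enum_uniq.
by apply/setP => x; rewrite -mem_enum E !inE !orbA.
Qed.

Lemma big_set4 (V : nmodType) (F : T -> V) a b c d : uniq [:: a; b; c; d] ->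
  \sum_(p in [set a; b; c; d]) F p = F a + F b + F c + F d.
Proof.
move=> U; rewrite (eq_bigl (mem [:: a; b; c; d])) => [|x]; last by rewrite !inE !orbA.
by rewrite -big_uniq //= !big_cons big_nil addr0 !addrA.
Qed.

Lemma imset_set4 (T' : finType) (f : T -> T') a b c d :
  f @: [set a; b; c; d] = [set f a; f b; f c; f d].
Proof. by rewrite !imsetU !imset_set1. Qed.

End FourSets.

Lemma uniq6_sub4 (T : eqType) (x y z w z' w' : T) : uniq [:: x; y; z; w; z'; w'] ->
  [/\ uniq [:: x; y; z; w], uniq [:: x; y; z'; w'] & uniq [:: z; w; z'; w']].
Proof.
move=> U; split; apply: (subseq_uniq _ U); apply/subseqP.
- by exists [:: true; true; true; true; false; false].
- by exists [:: true; true; false; false; true; true].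
- by exists [:: false; false; true; true; true; true].
Qed.

(** * Set systems and closed pairs *)

Section SetSystems.
Variable T : finType.
Implicit Types (S : {set {set T}}) (q : {set T}) (pi : T -> T).

Lemma imset_system_eq (T' : finType) (f : T -> T') S (S' : {set {set T'}}) :
  bijective f -> (forall q : {set T}, (q \in S) = (f @: q \in S')) ->
  [set f @: q | q : {set T} in S] = S'.
Proof.
case=> g fK gK memS; apply/setP => q'; apply/imsetP/idP => [[q Sq ->]|S'q']; first by rewrite -memS.
have q'E : q' = f @: (g @: q') by rewrite -imset_comp (eq_imset _ gK) imset_id.
by exists (g @: q'); rewrite // memS -q'E.
Qed.

Lemma mem_imset_system (T' : finType) (f : T -> T') S q :
  injective f -> (f @: q \in [set f @: q | q : {set T} in S]) = (q \in S).
Proof. by move/imset_inj; exact: mem_imset. Qed.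

Lemma mem_maps_onto pi S S' q :
  injective pi -> maps_onto pi S S' -> (pi @: q \in S') = (q \in S).
Proof. by move=> pi_inj <-; exact: mem_imset_system. Qed.

Lemma maps_onto_comp pi1 pi2 S1 S2 S3 :
  maps_onto pi1 S1 S2 -> maps_onto pi2 S2 S3 -> maps_onto (pi2 \o pi1) S1 S3.
Proof.
rewrite /maps_onto => <- <-; rewrite -imset_comp.
by apply: eq_imset => q; rewrite /= imset_comp.
Qed.

Lemma maps_onto_can pi g S S' :
  cancel pi g -> cancel g pi -> maps_onto pi S S' -> maps_onto g S' S.
Proof.
move=> piK gK piSS'; apply: imset_system_eq; first exact: Bijective gK piK.
move=> q; rewrite -(mem_maps_onto _ (can_inj piK) piSS').
by rewrite -imset_comp (eq_imset _ gK) imset_id.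
Qed.

Lemma eq_maps_onto pi pi' S S' : pi =1 pi' -> maps_onto pi S S' -> maps_onto pi' S S'.
Proof. by move=> eq_pi <-; apply: eq_imset => q; apply: eq_imset => x; rewrite eq_pi. Qed.

Lemma maps_onto_affine_SQS pi S S' :
  bijective pi -> maps_onto pi S S' -> affine_SQS S <-> affine_SQS S'.
Proof.
have pullback pi1 S1 S2 : bijective pi1 -> maps_onto pi1 S1 S2 -> affine_SQS S2 -> affine_SQS S1.
  move=> pi1_bij <- [m [f [f_bij fE]]]; exists m, (f \o pi1); split; first exact: bij_comp.
  by rewrite -fE -imset_comp; apply: eq_imset => q; rewrite /= imset_comp.
move=> pi_bij piSS'; split; last exact: pullback piSS'.
have [g piK gK] := pi_bij.
by apply: pullback (Bijective gK piK) _; exact: maps_onto_can piSS'.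
Qed.

Lemma affine_SQS_isomorphic S S' : affine_SQS S -> affine_SQS S' -> isomorphic_SQS S S'.
Proof.
case=> m [f [f_bij fE]] [m' [f' [f'_bij f'E]]].
have m'm : m' = m.
  by apply/eqP; rewrite -(@eqn_exp2l 2) // -!card_vec -(bij_eq_card f_bij) -(bij_eq_card f'_bij).
subst m'; have [g' f'K g'K] := f'_bij.
have gf_bij : bijective (g' \o f) by apply: bij_comp => //; exact: Bijective g'K f'K.
exists (perm (bij_inj gf_bij)); apply: (@eq_maps_onto (g' \o f)) => [x|]; first by rewrite permE.
apply: imset_system_eq => // q; rewrite -(mem_imset_system _ _ (bij_inj f_bij)) fE -f'E.
rewrite -[RHS](mem_imset_system _ _ (bij_inj f'_bij)) -imset_comp.
by rewrite (@eq_imset _ _ _ f) // => x /=; rewrite g'K.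
Qed.

Definition closed_pair S (x y : T) : Prop :=
  forall z w z' w', uniq [:: x; y; z; w; z'; w'] ->
    [set x; y; z; w] \in S -> [set x; y; z'; w'] \in S -> [set z; w; z'; w'] \in S.

Lemma closed_pair_sym S x y : closed_pair S x y -> closed_pair S y x.
Proof.
move=> closed_xy z w z' w'.
have setC u v : [set y; x; u; v] = [set x; y; u; v].
  by apply/setP => e; rewrite !inE (orbC (e == y)).
have uniqC (s : seq T) : uniq [:: y, x & s] = uniq [:: x, y & s].
  by rewrite /= !inE eq_sym; case: (x == y); case: (x \in s); case: (y \in s).
rewrite uniqC !setC; exact: (closed_xy z w z' w').
Qed.

Lemma closed_pair_maps_onto pi g S S' x y : cancel pi g -> cancel g pi ->
  maps_onto pi S S' -> closed_pair S x y -> closed_pair S' (pi x) (pi y).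
Proof.
move=> piK gK piSS' closed_xy z w z' w'.
have mem4 a b c d : ([set pi a; pi b; pi c; pi d] \in S') = ([set a; b; c; d] \in S).
  by rewrite -imset_set4 (mem_maps_onto _ (can_inj piK) piSS').
rewrite -[z]gK -[w]gK -[z']gK -[w']gK !mem4.
rewrite -[[:: pi x; _; _; _; _; _]]/(map pi [:: x; y; g z; g w; g z'; g w']).
rewrite (map_inj_uniq (can_inj piK)); exact: closed_xy.
Qed.

End SetSystems.

(** * Affine geometry of F^m *)

Lemma hamming_weight4_supportsE m :
  hamming_weight4_supports m = [set Z : {set vec m} | (#|Z| == 4%N) && (\sum_(x in Z) x == 0)].
Proof.
have scale_F2 (k : 'F_2) (x : vec m) : k *: x = if k != 0 then x else 0.
  by case: (F2P k) => ->; rewrite ?scale0r ?scale1r.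
apply/setP => Z; rewrite inE; apply/imsetP/andP => [[c] | [Z4 sumZ]].
  rewrite !inE => /andP [/andP [_ sum_c] c4] ->; split => //.
  rewrite (_ : \sum_(x in supp c) x = \sum_x c x *: x) //.
  by rewrite big_mkcond; apply: eq_bigr => x _; rewrite inE scale_F2.
pose c : {ffun vec m -> 'F_2} := [ffun x => if x \in Z then 1 else 0].
have suppc : supp c = Z by apply/setP => x; rewrite inE ffunE; case: (x \in Z).
exists c; rewrite // !inE suppc Z4 andbT.
rewrite (eq_bigr (fun x => if x \in Z then 1 else 0)) => [|x _]; last by rewrite ffunE.
rewrite -big_mkcond sumr_const (eqP Z4) natr_F2_eq0 /=.
rewrite (eq_bigr (fun x => if x \in Z then x else 0)) => [|x _]; last first.
  by rewrite ffunE scale_F2; case: (x \in Z).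
by rewrite -big_mkcond.
Qed.

Section AdditiveMaps.
Variable m : nat.

Lemma additive_mx n (h : 'cV['F_2]_m -> 'cV['F_2]_n) :
  {morph h : x y / x + y} -> exists M : 'M['F_2]_(n, m), forall x, h x = M *m x.
Proof.
move=> hD; have h0 : h 0 = 0 by have := hD 0 0; rewrite addr0 addmx_F2.
exists (\matrix_(i, j) h (delta_mx j 0) i 0) => x.
have xE : x = \sum_j x j 0 *: delta_mx j 0.
  by rewrite {1}[x]matrix_sum_delta; apply: eq_bigr => j _; rewrite big_ord1.
rewrite [in LHS]xE [in RHS]xE (big_morph h hD h0) mulmx_sumr; apply: eq_bigr => j _.
rewrite -scalemxAr -colE (_ : col j _ = h (delta_mx j 0)); last first.
  by apply/matrixP => i k; rewrite !mxE !ord1.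
by case: (F2P (x j 0)) => ->; rewrite ?scale0r ?scale1r.
Qed.

Lemma additive_inj_unitmx (h : 'cV['F_2]_m -> 'cV['F_2]_m) :
  injective h -> {morph h : x y / x + y} -> exists2 M, M \in unitmx & forall x, h x = M *m x.
Proof.
move=> h_inj hD; have [M hM] := additive_mx hD; exists M => //.
have [g hK gK] := injF_bij h_inj.
have [N gN] : exists N, forall x, g x = N *m x.
  by apply: additive_mx => x y; apply: h_inj; rewrite hD !gK.
have MNx (x : 'cV_m) : M *m (N *m x) = x by rewrite -gN -hM gK.
suff MN : M *m N = 1%:M by case: (mulmx1_unit MN).
apply/matrixP => i j; have := congr1 (fun v : 'cV['F_2]_m => v i 0) (MNx (delta_mx j 0)).
by rewrite mulmxA -colE mxE => ->; rewrite !mxE eqxx andbT.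
Qed.

Lemma sum4_preserving_affine (f : vec m -> vec m) : injective f ->
  (forall a b c d, uniq [:: a; b; c; d] -> a + b + c + d = 0 -> f a + f b + f c + f d = 0) ->
  exists2 A, A \in unitmx & forall x, f x = f 0 + A *m x.
Proof.
move=> f_inj f_sum4; pose h x := f x + f 0.
have hD : {morph h : x y / x + y}.
  move=> x y; case: (eqVneq x 0) => [-> | x0]; first by rewrite add0r /h addmx_F2 add0r.
  case: (eqVneq y 0) => [-> | y0]; first by rewrite addr0 /h addmx_F2 addr0.
  case: (eqVneq x y) => [<- | xy]; first by rewrite /h !addmx_F2.
  have U : uniq [:: 0; x; y; x + y].
    rewrite uniq4E !(eq_sym 0) addmx_eq0_F2 eq_addmx_F2 [x + y]addrC eq_addmx_F2.
    by rewrite x0 y0 xy.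
  have := f_sum4 _ _ _ _ U; rewrite add0r addmx_F2 => /(_ erefl) /eqP.
  by rewrite addmx_eq0_F2 /h => /eqP <-; rewrite [f 0 + f x]addrC -addrA.
have h_inj : injective h by move=> x y /addIr /f_inj.
have [A A_unit hA] := additive_inj_unitmx h_inj hD.
by exists A => // x; rewrite -hA /h addrCA addmx_F2 addr0.
Qed.

End AdditiveMaps.

(** * The quadruples of SQS_tau *)

Section Points.
Variable r : nat.
Implicit Types (p : pt r) (q : {set pt r}) (X Y : {set vec r}) (t : vec r -> vec r).

Definition il p : 'F_2 := if p is inl _ then 1 else 0.
Definition ir p : 'F_2 := if p is inr _ then 1 else 0.
Definition lv p : vec r := if p is inl x then x else 0.
Definition rv p : vec r := if p is inr y then y else 0.

Definition is_block t q :=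
  [&& #|q| == 4%N, \sum_(p in q) il p == 0, \sum_(p in q) ir p == 0
    & t (\sum_(p in q) lv p) == \sum_(p in q) rv p].

Lemma is_block_set4 t p1 p2 p3 p4 : uniq [:: p1; p2; p3; p4] ->
  is_block t [set p1; p2; p3; p4] =
  [&& il p1 + il p2 + il p3 + il p4 == 0, ir p1 + ir p2 + ir p3 + ir p4 == 0
    & t (lv p1 + lv p2 + lv p3 + lv p4) == rv p1 + rv p2 + rv p3 + rv p4].
Proof. by move=> U; rewrite /is_block card_set4 // !big_set4. Qed.

Definition lpart q := [set x | inl x \in q].
Definition rpart q := [set y | inr y \in q].

Lemma pt_setE q : q = inl @: lpart q :|: inr @: rpart q.
Proof.
apply/setP => p; rewrite in_setU; apply/idP/orP => [|[] /imsetP [x]]; last by rewrite inE => ? ->.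
  by case: p => x qx; [left | right]; apply/imsetP; exists x; rewrite ?inE.
by rewrite inE => ? ->.
Qed.

Lemma big_pt_set R (idx : R) (op : Monoid.law idx) (F : pt r -> R) q :
  \big[op/idx]_(p in q) F p =
  op (\big[op/idx]_(x in lpart q) F (inl x)) (\big[op/idx]_(y in rpart q) F (inr y)).
Proof. by rewrite big_sumType; congr (op _ _); apply: eq_bigl => x; rewrite inE. Qed.

Lemma card_pt_set q : #|q| = (#|lpart q| + #|rpart q|)%N.
Proof. by rewrite -!sum1_card big_pt_set. Qed.

Lemma sum_il q : \sum_(p in q) il p = #|lpart q|%:R.
Proof. by rewrite big_pt_set /= [X in _ + X]big1 // addr0 sumr_const. Qed.

Lemma sum_ir q : \sum_(p in q) ir p = #|rpart q|%:R.
Proof. by rewrite big_pt_set /= [X in X + _]big1 // add0r sumr_const. Qed.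

Lemma sum_lv q : \sum_(p in q) lv p = \sum_(x in lpart q) x.
Proof. by rewrite big_pt_set /= [X in _ + X]big1 // addr0. Qed.

Lemma sum_rv q : \sum_(p in q) rv p = \sum_(y in rpart q) y.
Proof. by rewrite big_pt_set /= [X in X + _]big1 // add0r. Qed.

Lemma imset_inl_Q0 X : #|X| = 4%N -> \sum_(x in X) x = 0 -> inl @: X \in Q0 r.
Proof.
move=> /eqP/set4P [a [b [c [d [U ->]]]]]; rewrite big_set4 // => sum0; rewrite /Q0 in_set.
apply/existsP; exists a; apply/existsP; exists b; apply/existsP; exists c; apply/existsP; exists d.
by rewrite -uniq4E U sum0 imset_set4 !eqxx.
Qed.

Lemma imset_inr_Q1 Y : #|Y| = 4%N -> \sum_(y in Y) y = 0 -> inr @: Y \in Q1 r.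
Proof.
move=> /eqP/set4P [a [b [c [d [U ->]]]]]; rewrite big_set4 // => sum0; rewrite /Q1 in_set.
apply/existsP; exists a; apply/existsP; exists b; apply/existsP; exists c; apply/existsP; exists d.
by rewrite -uniq4E U sum0 imset_set4 !eqxx.
Qed.

Lemma imset_inl_inr_Qtau t X Y : #|X| = 2%N -> #|Y| = 2%N ->
  t (\sum_(x in X) x) = \sum_(y in Y) y -> inl @: X :|: inr @: Y \in Qtau t.
Proof.
move=> /eqP/cards2P [a [c [ac ->]]] /eqP/cards2P [b [d [bd ->]]].
have sum2 (u v : vec r) : u != v -> \sum_(x in [set u; v]) x = u + v.
  by move=> uv; rewrite big_setU1 ?big_set1 ?inE.
rewrite !sum2 // => tac; rewrite /Qtau in_set.
apply/existsP; exists a; apply/existsP; exists b; apply/existsP; exists c; apply/existsP; exists d.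
by rewrite tac addmx_eq0_F2 bd !imsetU1 !imset_set1 setUA !eqxx.
Qed.

Section Blocks.
Variable t : vec r -> vec r.
Hypotheses (t_inj : injective t) (t0 : t 0 = 0).

Lemma SQS_is_block q : q \in SQS t -> is_block t q.
Proof.
move=> /setUP [/setUP [] |]; rewrite inE => /existsP [a] /existsP [b] /existsP [c] /existsP [d].
- rewrite -uniq4E => /and3P [U /eqP sum0 /eqP ->].
  have U' : uniq [:: L a; L b; L c; L d] := U.
  by rewrite is_block_set4 //= !addr0 sum0 t0.
- rewrite -uniq4E => /and3P [U /eqP sum0 /eqP ->].
  have U' : uniq [:: R a; R b; R c; R d] := U.
  by rewrite is_block_set4 //= !addr0 sum0 t0.
- move=> /and3P [/eqP tac bd0 /eqP ->].
  have ac : a != c by apply: contraNneq bd0 => ac; rewrite -tac ac addmx_F2 t0.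
  have U : uniq [:: L a; L c; R b; R d].
    by rewrite uniq4E /= ac (inj_eq (@inr_inj _ _)) -addmx_eq0_F2.
  by rewrite is_block_set4 //= !addr0 !add0r tac.
Qed.

Lemma imset_inl_inr_SQS X Y : ~~ odd #|X| -> (#|X| + #|Y| = 4)%N ->
  t (\sum_(x in X) x) = \sum_(y in Y) y -> inl @: X :|: inr @: Y \in SQS t.
Proof.
move=> evenX card4 tXY.
have [X0 | [X2 | X4]] : (#|X| = 0 \/ #|X| = 2 \/ #|X| = 4)%N.
  by move: card4 evenX; case: #|X| => [|[|[|[|[|n]]]]] //=; auto; rewrite !addSn.
- move: card4 tXY; rewrite X0 (cards0_eq X0) imset0 set0U big_set0 t0 => Y4 sumY.
  by apply/setUP; left; apply/setUP; right; exact: imset_inr_Q1.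
- have Y2 : #|Y| = 2%N by apply/eqP; rewrite -(eqn_add2l 2) -{1}X2 card4.
  by apply/setUP; right; exact: imset_inl_inr_Qtau.
- have /cards0_eq Y0 : #|Y| = 0%N by apply/eqP; rewrite -(eqn_add2l 4) -{1}X4 card4.
  have sumX : \sum_(x in X) x = 0 by apply: t_inj; rewrite tXY Y0 big_set0 t0.
  by rewrite Y0 imset0 setU0; apply/setUP; left; apply/setUP; left; exact: imset_inl_Q0.
Qed.

Lemma is_block_SQS q : is_block t q -> q \in SQS t.
Proof.
rewrite /is_block card_pt_set sum_il sum_ir sum_lv sum_rv !natr_F2_eq0.
by case/and4P => /eqP card4 evenX _ /eqP tXY; rewrite [q]pt_setE imset_inl_inr_SQS.
Qed.

Lemma mem_SQS q : (q \in SQS t) = is_block t q.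
Proof. by apply/idP/idP; [exact: SQS_is_block | exact: is_block_SQS]. Qed.

End Blocks.

Lemma sum_il_ir q : #|q| = 4%N -> \sum_(p in q) il p = \sum_(p in q) ir p.
Proof.
rewrite sum_il sum_ir card_pt_set => card4; apply: (addIr #|rpart q|%:R).
by rewrite addrr_F2 -natrD card4; apply/eqP; rewrite natr_F2_eq0.
Qed.

End Points.

(** * Isomorphisms between the systems *)

Section Transforms.
Variable r : nat.
Implicit Types (q : {set pt r}) (t : vec r -> vec r).

Lemma conjmap_mulmx t (A B : 'M['F_2]_r) x : A \in unitmx -> conjmap B t A (A *m x) = B *m t x.
Proof. by move=> A_unit; rewrite /conjmap mulKmx. Qed.

Lemma xiK : involutive (@xi r). Proof. by case. Qed.

Lemma is_block_xi t t' q : cancel t t' -> cancel t' t -> is_block t' (@xi r @: q) = is_block t q.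
Proof.
move=> tK t'K; have xi_inj := inv_inj xiK.
rewrite /is_block card_imset // !(big_imset _ (in2W xi_inj)) /=.
have -> : \sum_(p in q) il (xi p) = \sum_(p in q) ir p by apply: eq_bigr => -[].
have -> : \sum_(p in q) ir (xi p) = \sum_(p in q) il p by apply: eq_bigr => -[].
have -> : \sum_(p in q) lv (xi p) = \sum_(p in q) rv p by apply: eq_bigr => -[].
have -> : \sum_(p in q) rv (xi p) = \sum_(p in q) lv p by apply: eq_bigr => -[].
case: (#|q| == 4%N) => //=; rewrite andbCA; congr (_ && (_ && _)).
by apply/eqP/eqP => <-; rewrite ?tK ?t'K.
Qed.

Lemma maps_onto_xi t t' :
  cancel t t' -> cancel t' t -> t 0 = 0 -> maps_onto (@xi r) (SQS t) (SQS t').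
Proof.
move=> tK t'K t0; have t'0 : t' 0 = 0 by rewrite -t0 tK.
apply: imset_system_eq => [|q]; first exact: inv_bij xiK.
by rewrite (mem_SQS (can_inj tK) t0) (mem_SQS (can_inj t'K) t'0) (is_block_xi _ tK t'K).
Qed.

Section Sigma2.
Variables (a : vec r) (A : 'M['F_2]_r) (b : vec r) (B : 'M['F_2]_r).
Hypotheses (A_unit : A \in unitmx) (B_unit : B \in unitmx).
Local Notation sg := (sigma2 a A b B).

Lemma sigma2K : cancel sg (sigma2 (invmx A *m a) (invmx A) (invmx B *m b) (invmx B)).
Proof.
by case=> c /=; congr (_ _); rewrite mulmxDr addrA -mulmxDr addmx_F2 mulmx0 add0r mulKmx.
Qed.

Lemma sigma2_bij : bijective sg.
Proof.
exists (sigma2 (invmx A *m a) (invmx A) (invmx B *m b) (invmx B)); first exact: sigma2K.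
by case=> c /=; congr (_ _); rewrite mulmxDr !mulKVmx // addKmx_F2.
Qed.

Lemma is_block_sigma2 t t' q : (forall x, t' (A *m x) = B *m t x) ->
  is_block t' (sg @: q) = is_block t q.
Proof.
move=> tA; have sg_inj := can_inj sigma2K.
rewrite /is_block card_imset // !(big_imset _ (in2W sg_inj)) /=.
have -> : \sum_(p in q) il (sg p) = \sum_(p in q) il p by apply: eq_bigr => -[].
have -> : \sum_(p in q) ir (sg p) = \sum_(p in q) ir p by apply: eq_bigr => -[].
have -> : \sum_(p in q) lv (sg p) = (\sum_(p in q) il p) *: a + A *m \sum_(p in q) lv p.
  rewrite scaler_suml mulmx_sumr -big_split; apply: eq_bigr => -[] c _ /=.
    by rewrite scale1r.
  by rewrite scale0r mulmx0 addr0.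
have -> : \sum_(p in q) rv (sg p) = (\sum_(p in q) ir p) *: b + B *m \sum_(p in q) rv p.
  rewrite scaler_suml mulmx_sumr -big_split; apply: eq_bigr => -[] c _ /=.
    by rewrite scale0r mulmx0 addr0.
  by rewrite scale1r.
case: eqP => //= _; case: eqP => //= ->; case: eqP => //= ->.
by rewrite !scale0r !add0r tA (inj_eq (can_inj (mulKmx B_unit))).
Qed.

Lemma maps_onto_sigma2 t t' : injective t -> t 0 = 0 ->
  (forall x, t' (A *m x) = B *m t x) -> maps_onto sg (SQS t) (SQS t').
Proof.
move=> t_inj t0 tA; have t'E x : t' x = B *m t (invmx A *m x) by rewrite -tA mulKVmx.
have t'_inj : injective t'.
  by move=> x y; rewrite !t'E => /(can_inj (mulKmx B_unit)) /t_inj /(can_inj (mulKVmx A_unit)).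
have t'0 : t' 0 = 0 by rewrite t'E mulmx0 t0 mulmx0.
apply: imset_system_eq => [|q]; first exact: sigma2_bij.
by rewrite (mem_SQS t_inj t0) (mem_SQS t'_inj t'0) (is_block_sigma2 _ tA).
Qed.

Lemma maps_onto_sigma2_xi t t1 t' : cancel t t1 -> cancel t1 t -> t 0 = 0 ->
  (forall x, t' (A *m x) = B *m t1 x) -> maps_onto (sg \o @xi r) (SQS t) (SQS t').
Proof.
move=> tK t1K t0 t1A; apply: maps_onto_comp (maps_onto_xi tK t1K t0) _.
by apply: maps_onto_sigma2 t1A; [exact: can_inj t1K | rewrite -t0 tK].
Qed.

End Sigma2.
End Transforms.

Lemma additive_SQS_affine r (tau : {perm vec r}) :
  {morph tau : x y / x + y} -> affine_SQS (SQS tau).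
Proof.
move=> tauD; have tau0 : tau 0 = 0 by have := tauD 0 0; rewrite addr0 addmx_F2.
pose ti := (tau^-1)%g; have ti0 : ti 0 = 0 by rewrite -tau0 permK.
have tiD : {morph ti : x y / x + y} by move=> x y; apply: (@perm_inj _ tau); rewrite tauD !permKV.
pose f (p : pt r) : vec (1 + r) := col_mx (const_mx (ir p)) (lv p + ti (rv p)).
have f_inj : injective f.
  move=> [x|y] [x'|y'] /eq_col_mx [/matrixP/(_ 0 0)]; rewrite !mxE // => _ /=.
    by rewrite ti0 !addr0 => ->.
  by rewrite !add0r => /perm_inj ->.
have f_bij : bijective f.
  by apply: (inj_card_bij f_inj); rewrite card_vec card_sum card_vec expnS mul2n addnn.
exists (1 + r)%N, f; split => //; rewrite hamming_weight4_supportsE.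
apply: imset_system_eq => // q; rewrite (mem_SQS (@perm_inj _ tau) tau0) inE card_imset //.
rewrite (big_imset _ (in2W f_inj)) /= sum_col_mx col_mx_eq0 mx11_eq0 summxE big_split /=.
rewrite (eq_bigr (@ir r)) => [|p _]; last by rewrite mxE.
rewrite -(big_morph ti tiD ti0) addmx_eq0_F2 /is_block.
case: eqP => //= /sum_il_ir ->; case: eqP => //= _.
by apply/eqP/eqP => [<- | ->]; rewrite ?permK ?permKV.
Qed.

(** * Closed pairs of SQS_tau *)

Section ClosedPairs.
Variable r : nat.
Implicit Types (tau : {perm vec r}) (p : pt r).

Lemma pair_sum4 (V : zmodType) (F : pt r -> V) p1 p2 p3 p4 :
  F p1 + F p2 + F p3 + F p4 = (F p1 + F p2) + (F p3 + F p4).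
Proof. by rewrite addrA. Qed.

Lemma inl_pair_block tau a c z w : tau 0 = 0 -> uniq [:: inl a; inl c; z; w] ->
  [set inl a; inl c; z; w] \in SQS tau ->
  [/\ il z + il w = 0, ir z + ir w = 0 &
      (lv z + lv w = a + c /\ rv z + rv w = 0) \/ (lv z + lv w = 0 /\ rv z + rv w = tau (a + c))].
Proof.
move=> tau0 U; rewrite (mem_SQS (@perm_inj _ tau) tau0) is_block_set4 // !pair_sum4 /=.
case: z U => e; case: w => e' U //=; rewrite !addr0 ?add0r addrr_F2 => /eqP tau_sum.
  split => //; left; split => //; apply/esym/eqP.
  by rewrite -addmx_eq0_F2 -(inj_eq0 _ (@perm_inj _ tau) tau0) tau_sum.
by split => //; right.
Qed.

Lemma closed_pair_inl tau : tau 0 = 0 -> forall a c, closed_pair (SQS tau) (inl a) (inl c).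
Proof.
move=> tau0 a c z w z' w' /uniq6_sub4 [U1 U2 U3] B1 B2.
have [il1 ir1 P1] := inl_pair_block tau0 U1 B1; have [il2 ir2 P2] := inl_pair_block tau0 U2 B2.
rewrite (mem_SQS (@perm_inj _ tau) tau0) is_block_set4 // !pair_sum4 il1 ir1 il2 ir2 addr0 eqxx /=.
by case: P1 => -[-> ->]; case: P2 => -[-> ->]; rewrite ?addmx_F2 ?addr0 ?add0r ?tau0.
Qed.

Lemma closed_pair_inr tau : tau 0 = 0 -> forall b d, closed_pair (SQS tau) (inr b) (inr d).
Proof.
move=> tau0 b d; have taui0 : (tau^-1)%g 0 = 0 by rewrite -tau0 permK.
have xi_onto := maps_onto_xi (permKV tau) (permK tau) taui0.
exact: closed_pair_maps_onto (@xiK r) (@xiK r) xi_onto (@closed_pair_inl _ taui0 b d).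
Qed.

Lemma closed_pair_mixed_additive tau a b : tau 0 = 0 ->
  closed_pair (SQS tau) (inl a) (inr b) -> {morph tau : x y / x + y}.
Proof.
move=> tau0 closed_ab v v'.
have [-> | v0] := eqVneq v 0; first by rewrite tau0 !add0r.
have [-> | v'0] := eqVneq v' 0; first by rewrite tau0 !addr0.
have [<- | vv'] := eqVneq v v'; first by rewrite !addmx_F2 tau0.
have tauv0 u : u != 0 -> tau u != 0 by rewrite (inj_eq0 _ (@perm_inj _ tau) tau0).
have U : uniq [:: inl a; inr b; inl (a + v); inr (b + tau v); inl (a + v'); inr (b + tau v')].
  have inlr x y : (inl x == inr y :> pt r) = false by [].
  have inrl x y : (inr x == inl y :> pt r) = false by [].
  rewrite /= !inE !inlr !inrl !(inj_eq (@inl_inj _ _)) !(inj_eq (@inr_inj _ _)) !eq_addmx_F2.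
  rewrite !(inj_eq (addrI _)) (inj_eq (@perm_inj _ tau)) (negbTE v0) (negbTE v'0) (negbTE vv').
  by rewrite (negbTE (tauv0 _ v0)) (negbTE (tauv0 _ v'0)).
have [U1 U2 U3] := uniq6_sub4 U.
(* Closedness applied to the quadruples for u = v and u = v' leaves the quadruple whose
   defining equation is tau (v + v') = tau v + tau v'. *)
have block u : uniq [:: inl a; inr b; inl (a + u); inr (b + tau u)] ->
    [set inl a; inr b; inl (a + u); inr (b + tau u)] \in SQS tau.
  by move=> Uu; rewrite (mem_SQS (@perm_inj _ tau) tau0) is_block_set4 //= !addr0 !add0r !addKmx_F2.
have := closed_ab _ _ _ _ U (block _ U1) (block _ U2).
rewrite (mem_SQS (@perm_inj _ tau) tau0) is_block_set4 //= !addr0 !add0r.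
have addKA (x y z : vec r) : x + y + (x + z) = y + z by rewrite addrACA addmx_F2 add0r.
by rewrite !addKA => /eqP.
Qed.

Lemma closed_pairE tau x y : tau 0 = 0 -> ~ {morph tau : u v / u + v} ->
  closed_pair (SQS tau) x y <-> il x = il y.
Proof.
move=> tau0 tauN; split.
  case: x => a; case: y => b // closed_ab; case: tauN.
    exact: closed_pair_mixed_additive tau0 closed_ab.
  exact: closed_pair_mixed_additive tau0 (closed_pair_sym closed_ab).
case: x => a; case: y => b /= eq_il.
- exact: closed_pair_inl.
- by move/eqP: eq_il.
- by move/eqP: eq_il.
- exact: closed_pair_inr.
Qed.

End ClosedPairs.

Lemma maps_onto_sides r (tau tau' : {perm vec r}) (pi : {perm pt r}) :
  tau 0 = 0 -> tau' 0 = 0 -> ~ {morph tau : x y / x + y} -> ~ {morph tau' : x y / x + y} ->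
  maps_onto pi (SQS tau) (SQS tau') ->
  (forall p, il (pi p) = il p) \/ (forall p, il (pi p) = ir p).
Proof.
move=> tau0 tau'0 tauN tau'N piSS'.
have same_side p p' : (il (pi p) == il (pi p')) = (il p == il p').
  have piSS'_inv := maps_onto_can (permK pi) (permKV pi) piSS'.
  apply/eqP/eqP => [/(closed_pairE _ _ tau'0 tau'N) | /(closed_pairE _ _ tau0 tauN)] closed_pp'.
    apply/(closed_pairE _ _ tau0 tauN); rewrite -(permK pi p) -(permK pi p').
    exact: closed_pair_maps_onto (permKV pi) (permK pi) piSS'_inv closed_pp'.
  apply/(closed_pairE _ _ tau'0 tau'N).
  exact: closed_pair_maps_onto (permK pi) (permKV pi) piSS' closed_pp'.
case E: (pi (inl 0)) => [y0 | y0]; [left | right] => p; move: (same_side p (inl 0)); rewrite E;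
  by case: p => x; case: (pi _) => y.
Qed.

Section SidePreserving.
Variable r : nat.
Variables (t t' : vec r -> vec r) (pi : pt r -> pt r).
Hypotheses (t_inj : injective t) (t0 : t 0 = 0) (t'_inj : injective t') (t'0 : t' 0 = 0).
Hypotheses (pi_inj : injective pi) (pi_SQS : forall q, q \in SQS t -> pi @: q \in SQS t').
Hypothesis pi_side : forall p, il (pi p) = il p.

Let f x := lv (pi (inl x)).
Let g y := rv (pi (inr y)).

Let pi_inl x : pi (inl x) = inl (f x).
Proof. by have := pi_side (inl x); rewrite /f; case: (pi _). Qed.

Let pi_inr y : pi (inr y) = inr (g y).
Proof. by have := pi_side (inr y); rewrite /g; case: (pi _). Qed.

Let pi_set4 p1 p2 p3 p4 : uniq [:: p1; p2; p3; p4] -> [set p1; p2; p3; p4] \in SQS t ->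
  t' (lv (pi p1) + lv (pi p2) + lv (pi p3) + lv (pi p4)) =
  rv (pi p1) + rv (pi p2) + rv (pi p3) + rv (pi p4).
Proof.
move=> U /pi_SQS; rewrite imset_set4 (mem_SQS t'_inj t'0) is_block_set4.
  by case/and3P => _ _ /eqP.
by rewrite (map_inj_uniq pi_inj [:: p1; p2; p3; p4]).
Qed.

Let f_affine : exists2 A, A \in unitmx & forall x, f x = f 0 + A *m x.
Proof.
apply: sum4_preserving_affine => [x y fxy | a b c d U sum0].
  by apply: inl_inj; apply: pi_inj; rewrite !pi_inl fxy.
have U' : uniq ([:: inl a; inl b; inl c; inl d] : seq (pt r)) := U.
have := pi_set4 U'; rewrite (mem_SQS t_inj t0) is_block_set4 //= sum0 t0 !addr0 eqxx !pi_inl.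
by rewrite /= !addr0 => /(_ isT) /eqP; rewrite (inj_eq0 _ t'_inj t'0) => /eqP.
Qed.

Let g_affine : exists2 B, B \in unitmx & forall y, g y = g 0 + B *m y.
Proof.
apply: sum4_preserving_affine => [x y gxy | a b c d U sum0].
  by apply: inr_inj; apply: pi_inj; rewrite !pi_inr gxy.
have U' : uniq ([:: inr a; inr b; inr c; inr d] : seq (pt r)) := U.
have := pi_set4 U'; rewrite (mem_SQS t_inj t0) is_block_set4 //= !addr0 t0 sum0 eqxx !pi_inr /=.
by rewrite !addr0 t'0 => /(_ isT).
Qed.

Lemma side_preserving_sigma2 : exists a A b B, [/\ A \in unitmx, B \in unitmx,
  forall p, pi p = sigma2 a A b B p & forall x, t' x = conjmap B t A x].
Proof.
have [A A_unit fA] := f_affine; have [B B_unit gB] := g_affine.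
have t'A u : u != 0 -> t' (A *m u) = B *m t u.
  move=> u0; have tu0 : t u != 0 by rewrite (inj_eq0 _ t_inj t0).
  have U : uniq [:: inl 0; inl u; inr 0; inr (t u)].
    by rewrite uniq4E /= !(inj_eq (@inl_inj _ _)) !(inj_eq (@inr_inj _ _)) eq_sym u0 eq_sym tu0.
  have := pi_set4 U; rewrite (mem_SQS t_inj t0) is_block_set4 //= !addr0 !add0r eqxx.
  rewrite !pi_inl !pi_inr /=.
  by rewrite !addr0 !add0r (fA u) (gB (t u)) !addKmx_F2 => /(_ isT).
exists (f 0), A, (g 0), B; split => // [[x | y] | x]; first by rewrite pi_inl fA.
  by rewrite pi_inr gB.
have [-> | x0] := eqVneq x 0; first by rewrite /conjmap !mulmx0 t0 mulmx0 t'0.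
rewrite /conjmap -t'A ?mulKVmx //.
by apply: contraNneq x0 => /(congr1 (mulmx A)); rewrite mulKVmx // mulmx0 => ->.
Qed.

End SidePreserving.

Lemma maps_onto_nonaffine_sigma2 r (tau tau' : {perm vec r}) (pi : {perm pt r}) :
  tau 0 = 0 -> tau' 0 = 0 -> ~ (affine_SQS (SQS tau) /\ affine_SQS (SQS tau')) ->
  maps_onto pi (SQS tau) (SQS tau') ->
  (exists a A b B, [/\ A \in unitmx, B \in unitmx,
     forall p, pi p = sigma2 a A b B p & forall x, tau' x = conjmap B tau A x])
  \/
  (exists a A b B, [/\ A \in unitmx, B \in unitmx,
     forall p, pi p = sigma2 a A b B (xi p) & forall x, tau' x = conjmap B (tau^-1)%g A x]).
Proof.
move=> tau0 tau'0 not_affine piSS'.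
have pi_bij : bijective pi by exists (pi^-1)%g; [exact: permK | exact: permKV].
have affineE := maps_onto_affine_SQS pi_bij piSS'.
have tauN : ~ {morph tau : x y / x + y}.
  by move/additive_SQS_affine => tau_aff; apply: not_affine; split; last exact/affineE.
have tau'N : ~ {morph tau' : x y / x + y}.
  by move/additive_SQS_affine => tau'_aff; apply: not_affine; split; first exact/affineE.
have pi_SQS q : q \in SQS tau -> pi @: q \in SQS tau'.
  by rewrite (mem_maps_onto _ (@perm_inj _ pi) piSS').
have [pi_side | pi_swap] := maps_onto_sides tau0 tau'0 tauN tau'N piSS'.
  by left; apply: side_preserving_sigma2 pi_side; rewrite ?tau0 ?tau'0 //; exact: perm_inj.
right; have taui0 : (tau^-1)%g 0 = 0 by rewrite -tau0 permK.
have xi_SQS := maps_onto_xi (permKV tau) (permK tau) taui0.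
have [|||||||a [A [b [B [A_unit B_unit piE tau'E]]]]] :=
  @side_preserving_sigma2 r (tau^-1)%g tau' (pi \o @xi r).
- exact: perm_inj.
- exact: taui0.
- exact: perm_inj.
- exact: tau'0.
- exact: inj_comp (@perm_inj _ pi) (inv_inj (@xiK r)).
- by move=> q; rewrite -(mem_maps_onto _ (inv_inj (@xiK r)) xi_SQS) imset_comp; exact: pi_SQS.
- by move=> p; rewrite /= pi_swap; case: p.
by exists a, A, b, B; split=> // p; rewrite -piE /= xiK.
Qed.

Theorem theorem1 (r : nat) (hr : (0 < r)%N) :
  (* (i) *)
  (forall tau tau' : {perm vec r}, tau 0 = 0 -> tau' 0 = 0 ->
     affine_SQS (SQS tau) -> affine_SQS (SQS tau') ->
     isomorphic_SQS (SQS tau) (SQS tau'))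
  /\
  (* (ii) *)
  (forall tau tau' : {perm vec r}, tau 0 = 0 -> tau' 0 = 0 ->
     ~ (affine_SQS (SQS tau) /\ affine_SQS (SQS tau')) ->
     forall pi : {perm pt r},
       maps_onto pi (SQS tau) (SQS tau') <->
       ((exists (a : vec r) (A : 'M['F_2]_r) (b : vec r) (B : 'M['F_2]_r),
           [/\ A \in unitmx, B \in unitmx,
               (forall p, pi p = sigma2 a A b B p) &
               (forall x, tau' x = conjmap B tau A x)])
        \/
        (exists (a : vec r) (A : 'M['F_2]_r) (b : vec r) (B : 'M['F_2]_r),
           [/\ A \in unitmx, B \in unitmx,
               (forall p, pi p = sigma2 a A b B (xi p)) &
               (forall x, tau' x = conjmap B (tau^-1)%g A x)])))
  /\
  (* Moreover *)
  (forall tau : {perm vec r}, tau 0 = 0 ->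
     forall (a : vec r) (A : 'M['F_2]_r) (b : vec r) (B : 'M['F_2]_r),
       A \in unitmx -> B \in unitmx ->
       maps_onto (sigma2 a A b B) (SQS tau) (SQS (conjmap B tau A)) /\
       maps_onto (fun p => sigma2 a A b B (xi p)) (SQS tau)
                 (SQS (conjmap B (tau^-1)%g A))).
Proof.
split; first by move=> tau tau' _ _; exact: affine_SQS_isomorphic.
split; last first.
  move=> tau tau0 a A b B A_unit B_unit.
  have tauA x := conjmap_mulmx tau B x A_unit.
  have tauiA x := conjmap_mulmx (tau^-1)%g B x A_unit.
  split; first exact: (maps_onto_sigma2 a b A_unit B_unit (@perm_inj _ tau) tau0 tauA).
  exact: (maps_onto_sigma2_xi a b A_unit B_unit (permK tau) (permKV tau) tau0 tauiA).
move=> tau tau' tau0 tau'0 not_affine pi; split; first exact: maps_onto_nonaffine_sigma2.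
case=> -[a [A [b [B [A_unit B_unit piE tau'E]]]]]; apply: eq_maps_onto (fun p => esym (piE p)) _.
  apply: (maps_onto_sigma2 a b A_unit B_unit (@perm_inj _ tau) tau0) => x.
  by rewrite tau'E conjmap_mulmx.
apply: (maps_onto_sigma2_xi a b A_unit B_unit (permK tau) (permKV tau) tau0) => x.
by rewrite tau'E conjmap_mulmx.
Qed.
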